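(* Let $(M,d)$ and $(N,\rho)$ be complete pointed metric spaces, $(f_n)_n\subset\mathrm{Lip}_0(M,N)$ and $g\in\mathrm{Lip}_0(M,N)$ such that $(\widehat{f_n})_n$ converges to $\widehat g$ in the weak operator topology of $\mathcal L(\mathcal F(M),\mathcal F(N))$. Then $(\widehat{f_n})_n$ converges to $\widehat g$ in the strong operator topology.
   Context: A pointed metric space is a metric space with a distinguished point $0$. $\mathrm{Lip}_0(M,N)$ denotes the Lipschitz maps $f:M\to N$ with $f(0_M)=0_N$; $\mathrm{Lip}_0(M)=\mathrm{Lip}_0(M,\mathbb R)$ normed by the Lipschitz constant. $\delta_M:M\to\mathrm{Lip}_0(M)^*$, $\delta_M(x)(\varphi)=\varphi(x)$; $\mathcal F(M)$ is the norm-closed linear span of $\delta_M(M)$. For $f\in\mathrm{Lip}_0(M,N)$, $\widehat f:\mathcal F(M)\to\mathcal F(N)$ is the unique bounded linear operator with $\widehat f(\delta_M(x))=\delta_N(f(x))$. Operators $T_n\to T$ in the strong operator topology if $T_n\mu\to T\mu$ in norm for every $\mu$, and in the weak operator topology if $\langle y^*,T_n\mu\rangle\to\langle y^*,T\mu\rangle$ for all $\mu$ and all functionals $y^*$ on the target space. *)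

From Stdlib Require Import Reals List.
Open Scope R_scope.

Definition is_metric {M : Type} (d : M -> M -> R) : Prop :=
  (forall x y, 0 <= d x y) /\ (forall x y, d x y = 0 <-> x = y) /\
  (forall x y, d x y = d y x) /\ (forall x y z, d x z <= d x y + d y z).

Definition complete {M : Type} (d : M -> M -> R) : Prop :=
  forall u : nat -> M,
    (forall e, e > 0 -> exists K, forall m n, (m >= K)%nat -> (n >= K)%nat -> d (u m) (u n) < e) ->
    exists l, forall e, e > 0 -> exists K, forall n, (n >= K)%nat -> d (u n) l < e.

Definition lipschitz_with {M N : Type} (dM : M -> M -> R) (dN : N -> N -> R)
  (L : R) (f : M -> N) : Prop :=
  forall x y, dN (f x) (f y) <= L * dM x y.

Definition lip0map {M N : Type} (dM : M -> M -> R) (x0 : M) (dN : N -> N -> R) (y0 : N)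
  (f : M -> N) : Prop :=
  (exists L, lipschitz_with dM dN L f) /\ f x0 = y0.

Definition lip0 {M : Type} (dM : M -> M -> R) (x0 : M) (phi : M -> R) : Prop :=
  lip0map dM x0 R_dist 0 phi.

(* candidate elements of Lip_0(M)^* : functions on real-valued maps;
   only their values on Lip_0(M) matter *)
Definition functional (M : Type) := (M -> R) -> R.

Definition dnorm_le {M : Type} (dM : M -> M -> R) (x0 : M) (mu : functional M) (c : R) : Prop :=
  forall phi, lip0 dM x0 phi -> lipschitz_with dM R_dist 1 phi -> Rabs (mu phi) <= c.

Definition dual_elem {M : Type} (dM : M -> M -> R) (x0 : M) (mu : functional M) : Prop :=
  (forall a b phi psi, lip0 dM x0 phi -> lip0 dM x0 psi ->
     mu (fun x => a * phi x + b * psi x) = a * mu phi + b * mu psi) /\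
  exists C, dnorm_le dM x0 mu C.

Definition delta {M : Type} (x : M) : functional M := fun phi => phi x.

Definition mol {M : Type} (l : list (R * M)) : functional M :=
  fun phi => fold_right (fun p acc => fst p * phi (snd p) + acc) 0 l.

(* mu in F(M): the norm closure of span delta(M) inside Lip_0(M)^* *)
Definition in_free {M : Type} (dM : M -> M -> R) (x0 : M) (mu : functional M) : Prop :=
  dual_elem dM x0 mu /\
  forall e, e > 0 -> exists l, dnorm_le dM x0 (fun phi => mu phi - mol l phi) e.

Definition lincomb {M : Type} (a : R) (mu : functional M) (b : R) (nu : functional M) : functional M :=
  fun phi => a * mu phi + b * nu phi.

(* T is the linearization \hat f : F(M) -> F(N): a bounded linear operator
   F(M) -> F(N) with T (delta x) = delta (f x) (equalities in F(N), i.e. on Lip_0(N)) *)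
Definition is_linearization {M N : Type} (dM : M -> M -> R) (x0 : M)
  (dN : N -> N -> R) (y0 : N) (f : M -> N) (T : functional M -> functional N) : Prop :=
  (forall mu, in_free dM x0 mu -> in_free dN y0 (T mu)) /\
  (forall a b mu nu, in_free dM x0 mu -> in_free dM x0 nu ->
     forall phi, lip0 dN y0 phi ->
       T (lincomb a mu b nu) phi = a * T mu phi + b * T nu phi) /\
  (exists C, forall mu c, in_free dM x0 mu -> dnorm_le dM x0 mu c ->
       dnorm_le dN y0 (T mu) (C * c)) /\
  (forall x phi, lip0 dN y0 phi -> T (delta x) phi = phi (f x)).

Definition free_dual_elem {N : Type} (dN : N -> N -> R) (y0 : N) (y : functional N -> R) : Prop :=
  (forall a b mu nu, in_free dN y0 mu -> in_free dN y0 nu ->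
     y (lincomb a mu b nu) = a * y mu + b * y nu) /\
  exists C, forall mu c, in_free dN y0 mu -> dnorm_le dN y0 mu c -> Rabs (y mu) <= C * c.

Definition wot_conv {M N : Type} (dM : M -> M -> R) (x0 : M) (dN : N -> N -> R) (y0 : N)
  (T : nat -> functional M -> functional N) (S : functional M -> functional N) : Prop :=
  forall mu, in_free dM x0 mu -> forall y, free_dual_elem dN y0 y ->
    Un_cv (fun n => y (T n mu)) (y (S mu)).

Definition sot_conv {M N : Type} (dM : M -> M -> R) (x0 : M) (dN : N -> N -> R) (y0 : N)
  (T : nat -> functional M -> functional N) (S : functional M -> functional N) : Prop :=
  forall mu, in_free dM x0 mu -> forall e, e > 0 -> exists K, forall n, (n >= K)%nat ->
    dnorm_le dN y0 (fun phi => T n mu phi - S mu phi) e.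

From Stdlib Require Import Reals List Lra Lia Classical ClassicalEpsilon FunctionalExtensionality.
From Coquelicot Require Import Coquelicot.
Open Scope R_scope.

(* Everything rests on the identity [<\hat f mu, phi> = <mu, phi o f>] for [mu] in F(M) and
   [phi] in Lip_0(N) ([linearization_formula]), proved by density of molecules in F(M).
   Weak convergence then says that [<mu, phi o f_n> -> <mu, phi o g>] for all [mu], [phi]:
   1. testing against Dirac masses and distance functions gives [f_n -> g] pointwise;
   2. a uniform boundedness principle ([uniformly_lipschitz]), proved by a gliding hump:
      without a common Lipschitz constant one constructs recursively steep pairs
      [(a_k, b_k)] of maps [f_(n_k)], a molecule series [mu] and a 1-Lipschitz [phi]
      with [|<mu, phi o f_(n_k)>| >= k], contradicting the convergence of these pairings;
   3. a common Lipschitz constant and pointwise convergence give convergence uniformly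
      over the unit ball of Lip_0(N), by approximating [mu] by a molecule
      ([uniform_convergence]); this is strong operator convergence. *)

Lemma Rabs_le_eps_zero (x K : R) : (forall e, e > 0 -> Rabs x <= e * K) -> x = 0.
Proof.
  intros H. destruct (Req_dec x 0) as [|Hx]; auto.
  assert (Hpos : Rabs x > 0) by (apply Rabs_pos_lt; auto).
  set (K' := Rabs K + 1).
  assert (HK' : K' > 0) by (unfold K'; pose proof (Rabs_pos K); lra).
  assert (He : Rabs x / (2 * K') > 0) by (apply Rdiv_lt_0_compat; lra).
  specialize (H _ He).
  assert (Rabs x / (2 * K') * K <= Rabs x / (2 * K') * K').
  { apply Rmult_le_compat_l; [lra|]. unfold K'. pose proof (Rle_abs K). lra. }
  assert (Rabs x / (2 * K') * K' = Rabs x / 2) by (field; lra).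
  lra.
Qed.

Lemma Rabs_div_pos (a b : R) : b > 0 -> Rabs (a / b) = Rabs a / b.
Proof. intros. rewrite Rabs_div, (Rabs_right b); lra. Qed.

Lemma cv_bounded (u : nat -> R) (l : R) : Un_cv u l -> exists B, forall n, Rabs (u n) <= B.
Proof.
  intros H.
  destruct (cauchy_bound _ (CV_Cauchy _ (exist _ _ (cv_cvabs _ _ H)))) as [B HB].
  exists B. intros n. apply HB. exists n. reflexivity.
Qed.

Lemma choose_sign (A Q c : R) : 0 <= c ->
  exists s, (s = 1 \/ s = -1) /\ c * Rabs Q <= Rabs (A + s * c * Q).
Proof.
  intros Hc.
  assert (H2 : 2 * (c * Rabs Q) <= Rabs (A + 1 * c * Q) + Rabs (A + -1 * c * Q)).
  { replace (2 * (c * Rabs Q)) with (Rabs ((A + 1 * c * Q) - (A + -1 * c * Q))).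
    - unfold Rminus. eapply Rle_trans; [apply Rabs_triang|]. rewrite Rabs_Ropp. lra.
    - replace ((A + 1 * c * Q) - (A + -1 * c * Q)) with ((2 * c) * Q) by ring.
      rewrite Rabs_mult, (Rabs_right (2 * c)) by lra. ring. }
  destruct (Rle_dec (Rabs (A + -1 * c * Q)) (Rabs (A + 1 * c * Q))).
  - exists 1. split; auto. lra.
  - exists (-1). split; auto. lra.
Qed.

Fixpoint fsum (m : nat) (u : nat -> R) : R :=
  match m with O => 0 | S m => fsum m u + u m end.

Lemma fsum_S (m : nat) (u : nat -> R) : fsum (S m) u = fsum m u + u m.
Proof. reflexivity. Qed.

Lemma fsum_ext (m : nat) (u v : nat -> R) :
  (forall j, (j < m)%nat -> u j = v j) -> fsum m u = fsum m v.
Proof.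
  induction m as [|m IH]; simpl; intros H; auto.
  rewrite IH, (H m) by (intros; try apply H; lia). reflexivity.
Qed.

Lemma fsum_plus (m : nat) (u v : nat -> R) : fsum m (fun j => u j + v j) = fsum m u + fsum m v.
Proof. induction m; simpl; [ring|]. rewrite IHm; ring. Qed.

Lemma fsum_minus (m : nat) (u v : nat -> R) : fsum m (fun j => u j - v j) = fsum m u - fsum m v.
Proof. induction m; simpl; [ring|]. rewrite IHm; ring. Qed.

Lemma fsum_scal (m : nat) (a : R) (u : nat -> R) : fsum m (fun j => a * u j) = a * fsum m u.
Proof. induction m; simpl; [ring|]. rewrite IHm; ring. Qed.

Lemma fsum_abs (m : nat) (u : nat -> R) : Rabs (fsum m u) <= fsum m (fun j => Rabs (u j)).
Proof.
  induction m; simpl; [rewrite Rabs_R0; lra|].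
  eapply Rle_trans; [apply Rabs_triang|]. lra.
Qed.

Lemma fsum_le (m : nat) (u v : nat -> R) :
  (forall j, (j < m)%nat -> u j <= v j) -> fsum m u <= fsum m v.
Proof.
  induction m as [|m IH]; simpl; intros H; [lra|].
  pose proof (H m ltac:(lia)). pose proof (IH ltac:(intros; apply H; lia)). lra.
Qed.

(* The weights [c_0 = 1/2], [c_(k+1) = c_k^2 / 16]: they decay fast enough that the
   tail after [c_k] is negligible even compared with [c_k^2]. *)
Fixpoint weight (k : nat) : R :=
  match k with O => / 2 | S k => weight k * weight k / 16 end.

Lemma weight_bounds (k : nat) : 0 < weight k <= / 2.
Proof.
  induction k as [|k [H1 H2]]; simpl; [lra|]. split.
  - apply Rdiv_lt_0_compat; [apply Rmult_lt_0_compat|]; lra.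
  - assert (weight k * weight k <= weight k * / 2) by (apply Rmult_le_compat_l; lra). lra.
Qed.

Lemma weight_S (k : nat) : weight (S k) <= weight k / 2.
Proof.
  simpl. destruct (weight_bounds k) as [H1 H2].
  assert (weight k * weight k <= weight k * / 2) by (apply Rmult_le_compat_l; lra). lra.
Qed.

Lemma weight_geom (m i : nat) : weight (m + i) <= weight m * (/ 2) ^ i.
Proof.
  induction i as [|i IH].
  - rewrite Nat.add_0_r. simpl. lra.
  - replace (m + S i)%nat with (S (m + i)) by lia. simpl.
    pose proof (weight_S (m + i)). simpl in H. lra.
Qed.

(* The weights before [m] plus twice [c_m] (a bound for the whole tail) sum to at most 1. *)
Lemma weight_sum (m : nat) : fsum m weight + 2 * weight m <= 1.
Proof. induction m; simpl; [lra|]. pose proof (weight_S m). simpl in H. lra. Qed.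

Lemma weight_small (e : R) : e > 0 -> exists m, 2 * weight m <= e.
Proof.
  intros He. destruct (pow_lt_1_zero (/ 2) ltac:(rewrite Rabs_right; lra) e He) as [K HK].
  exists K. specialize (HK K (le_n _)). rewrite Rabs_right in HK by (apply Rle_ge, pow_le; lra).
  pose proof (weight_geom O K). simpl in H. lra.
Qed.

Lemma series_geom_dominated (a : nat -> R) (K : R) :
  (forall i, Rabs (a i) <= K * (/ 2) ^ i) -> ex_series a /\ Rabs (Series a) <= 2 * K.
Proof.
  intros H.
  assert (Hq : Rabs (/ 2) < 1) by (rewrite Rabs_right; lra).
  assert (Hg : ex_series (fun i => K * (/ 2) ^ i)).
  { apply (ex_series_ext (fun i => scal K ((/ 2) ^ i))); [reflexivity|].
    apply (@ex_series_scal_l R_AbsRing R_NormedModule), ex_series_geom, Hq. }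
  assert (Ha : ex_series (fun i => Rabs (a i))).
  { apply (@ex_series_le R_AbsRing R_CompleteNormedModule _ (fun i => K * (/ 2) ^ i)); [|exact Hg].
    intros n. change (Rabs (Rabs (a n)) <= K * (/ 2) ^ n). rewrite Rabs_Rabsolu. apply H. }
  split; [apply ex_series_Rabs, Ha|].
  eapply Rle_trans; [apply Series_Rabs, Ha|].
  eapply Rle_trans; [apply Series_le; [|exact Hg]|].
  - intros n; split; [apply Rabs_pos | apply H].
  - rewrite Series_scal_l, Series_geom by exact Hq. lra.
Qed.

Lemma weighted_tail_bound (v : nat -> R) (V : R) (m : nat) :
  (forall j, Rabs (v j) <= V) ->
  ex_series (fun i => weight (m + i) * v (m + i)%nat) /\
  Rabs (Series (fun i => weight (m + i) * v (m + i)%nat)) <= 2 * (weight m * V).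
Proof.
  intros H. apply series_geom_dominated. intros i.
  destruct (weight_bounds (m + i)) as [Hc _].
  rewrite Rabs_mult, (Rabs_right (weight (m + i))) by lra.
  pose proof (weight_geom m i).
  assert (weight (m + i) * Rabs (v (m + i)%nat) <= weight (m + i) * V)
    by (apply Rmult_le_compat_l; [lra | apply H]).
  assert (0 <= V) by (pose proof (H O); pose proof (Rabs_pos (v O)); lra).
  assert (weight (m + i) * V <= weight m * (/ 2) ^ i * V) by (apply Rmult_le_compat_r; lra).
  lra.
Qed.

Lemma weighted_series_ex (v : nat -> R) (V : R) :
  (forall j, Rabs (v j) <= V) -> ex_series (fun j => weight j * v j).
Proof. intros H. exact (proj1 (weighted_tail_bound v V O H)). Qed.

Lemma weighted_series_split (v : nat -> R) (V : R) (m : nat) :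
  (forall j, Rabs (v j) <= V) -> exists t,
  Series (fun j => weight j * v j) = fsum m (fun j => weight j * v j) + t /\
  Rabs t <= 2 * weight m * V.
Proof.
  intros H. exists (Series (fun i => weight (m + i) * v (m + i)%nat)).
  split; [|pose proof (proj2 (weighted_tail_bound v V m H)); lra].
  induction m as [|m IH].
  - simpl. rewrite Rplus_0_l. reflexivity.
  - rewrite IH, fsum_S, (Series_incr_1 _ (proj1 (weighted_tail_bound v V m H))), Nat.add_0_r.
    rewrite (Series_ext _ (fun i => weight (S m + i) * v (S m + i)%nat)); [ring|].
    intros n. replace (m + S n)%nat with (S m + n)%nat by lia. reflexivity.
Qed.

(* Since the weights sum to at most 1, weighted sums of sequences that are termwise
   [delta]-close are [delta]-close. *)
Lemma weighted_fsum_close (m : nat) (u v : nat -> R) (delta : R) :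
  0 <= delta -> (forall j, (j < m)%nat -> Rabs (u j - v j) <= delta) ->
  Rabs (fsum m (fun j => weight j * u j) - fsum m (fun j => weight j * v j)) <= delta.
Proof.
  intros Hd H. rewrite <- fsum_minus.
  eapply Rle_trans; [apply fsum_abs|].
  eapply Rle_trans; [apply (fsum_le m _ (fun j => delta * weight j))|].
  - intros j Hj. destruct (weight_bounds j) as [Hc _].
    rewrite <- Rmult_minus_distr_l, Rabs_mult, (Rabs_right (weight j)), Rmult_comm by lra.
    apply Rmult_le_compat_r; [lra | auto].
  - rewrite fsum_scal. pose proof (weight_sum m). pose proof (weight_bounds m).
    assert (Hsum : fsum m weight <= 1) by lra.
    pose proof (Rmult_le_compat_l _ _ _ Hd Hsum). lra.
Qed.

Section FreeSpace.
Variables (X : Type) (dX : X -> X -> R) (z0 : X).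
Hypothesis hX : is_metric dX.

Lemma dist_nonneg (x y : X) : 0 <= dX x y.
Proof. apply (proj1 hX). Qed.
Lemma dist_refl (x : X) : dX x x = 0.
Proof. apply (proj1 (proj2 hX)); auto. Qed.
Lemma dist_eq (x y : X) : dX x y = 0 -> x = y.
Proof. apply (proj1 (proj2 hX)). Qed.
Lemma dist_sym (x y : X) : dX x y = dX y x.
Proof. apply (proj1 (proj2 (proj2 hX))). Qed.
Lemma dist_triangle (x y z : X) : dX x z <= dX x y + dX y z.
Proof. apply (proj2 (proj2 (proj2 hX))). Qed.

Lemma lipschitz_enlarge {Y : Type} (dY : Y -> Y -> R) (L : R) (h : X -> Y) :
  lipschitz_with dX dY L h -> lipschitz_with dX dY (Rabs L + 1) h.
Proof.
  intros H x y. specialize (H x y). pose proof (dist_nonneg x y).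
  assert (L * dX x y <= (Rabs L + 1) * dX x y).
  { apply Rmult_le_compat_r; auto. pose proof (Rle_abs L); lra. }
  lra.
Qed.

Lemma dist_fun_lip0 (p : X) :
  lip0 dX z0 (fun z => dX z p - dX z0 p) /\ lipschitz_with dX R_dist 1 (fun z => dX z p - dX z0 p).
Proof.
  assert (H1 : lipschitz_with dX R_dist 1 (fun z => dX z p - dX z0 p)).
  { intros z z'. unfold R_dist. rewrite Rmult_1_l.
    replace (dX z p - dX z0 p - (dX z' p - dX z0 p)) with (dX z p - dX z' p) by ring.
    pose proof (dist_triangle z z' p). pose proof (dist_triangle z' z p).
    rewrite (dist_sym z' z) in H0. apply Rabs_le; lra. }
  split; auto. split; [exists 1; auto | ring].
Qed.

Lemma dual_bound (nu : functional X) (c : R) (chi : X -> R) (L : R) :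
  dual_elem dX z0 nu -> dnorm_le dX z0 nu c -> lip0 dX z0 chi ->
  lipschitz_with dX R_dist L chi -> L > 0 -> Rabs (nu chi) <= c * L.
Proof.
  intros [Hlin _] Hn Hchi Hl HL.
  set (psi := fun x => chi x / L).
  assert (Hpsi1 : lipschitz_with dX R_dist 1 psi).
  { intros x y. unfold psi, R_dist.
    replace (chi x / L - chi y / L) with ((chi x - chi y) / L) by (field; lra).
    rewrite Rabs_div_pos by lra. apply Rle_div_l; auto.
    specialize (Hl x y). unfold R_dist in Hl. lra. }
  assert (Hpsi : lip0 dX z0 psi).
  { split; [exists 1; exact Hpsi1|]. unfold psi. rewrite (proj2 Hchi). field; lra. }
  assert (E : chi = fun x => L * psi x + 0 * psi x).
  { apply functional_extensionality; intros x; unfold psi; field; lra. }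
  rewrite E, Hlin by auto.
  replace (L * nu psi + 0 * nu psi) with (L * nu psi) by ring.
  rewrite Rabs_mult, (Rabs_right L), Rmult_comm by lra.
  apply Rmult_le_compat_r; [lra | apply Hn; auto].
Qed.

Lemma eval_free_dual (phi : X -> R) : lip0 dX z0 phi -> free_dual_elem dX z0 (fun nu => nu phi).
Proof.
  intros Hphi. split; [intros; reflexivity|].
  destruct (proj1 Hphi) as [L HL]. apply lipschitz_enlarge in HL.
  exists (Rabs L + 1). intros mu c Hmu Hc.
  rewrite Rmult_comm. apply dual_bound; auto; [apply Hmu | pose proof (Rabs_pos L); lra].
Qed.

Lemma mol_nil : @mol X nil = lincomb 0 (delta z0) 0 (delta z0).
Proof. apply functional_extensionality; intros phi. unfold mol, lincomb; simpl. ring. Qed.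

Lemma mol_cons (p : R * X) (l : list (R * X)) :
  mol (p :: l) = lincomb (fst p) (delta (snd p)) 1 (mol l).
Proof. apply functional_extensionality; intros phi. unfold mol, lincomb, delta; simpl. ring. Qed.

Lemma mol_app (l1 l2 : list (R * X)) (phi : X -> R) : mol (l1 ++ l2) phi = mol l1 phi + mol l2 phi.
Proof. induction l1 as [|p l IH]; simpl; [ring|]. rewrite IH; ring. Qed.

Lemma mol_scale (a : R) (l : list (R * X)) (phi : X -> R) :
  mol (map (fun p => (a * fst p, snd p)) l) phi = a * mol l phi.
Proof. induction l as [|p l IH]; simpl; [ring|]. rewrite IH; ring. Qed.

Lemma mol_diff (l : list (R * X)) (chi1 chi2 w : X -> R) :
  (forall x, Rabs (chi1 x - chi2 x) <= w x) ->
  Rabs (mol l chi1 - mol l chi2) <= fold_right (fun p acc => Rabs (fst p) * w (snd p) + acc) 0 l.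
Proof.
  intros H. induction l as [|p l IH].
  - unfold mol; simpl. rewrite Rminus_0_r, Rabs_R0. lra.
  - unfold mol in *; simpl.
    replace (fst p * chi1 (snd p) + _ - _) with
      (fst p * (chi1 (snd p) - chi2 (snd p)) +
       (fold_right (fun q acc => fst q * chi1 (snd q) + acc) 0 l -
        fold_right (fun q acc => fst q * chi2 (snd q) + acc) 0 l)) by ring.
    eapply Rle_trans; [apply Rabs_triang|]. rewrite Rabs_mult.
    assert (Rabs (fst p) * Rabs (chi1 (snd p) - chi2 (snd p)) <= Rabs (fst p) * w (snd p))
      by (apply Rmult_le_compat_l; [apply Rabs_pos | apply H]).
    lra.
Qed.

Lemma mol_in_free (l : list (R * X)) : in_free dX z0 (mol l).
Proof.
  split; [split|].
  - intros a b phi psi _ _. induction l as [|p l IH]; unfold mol in *; simpl; [ring|].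
    rewrite IH. ring.
  - exists (fold_right (fun p acc => Rabs (fst p) * dX (snd p) z0 + acc) 0 l).
    intros phi [_ H0] H1.
    assert (H00 : mol l (fun _ => 0) = 0)
      by (induction l as [|q l IH]; unfold mol in *; simpl; [ring | rewrite IH; ring]).
    replace (mol l phi) with (mol l phi - mol l (fun _ => 0)) by (rewrite H00; ring).
    apply (mol_diff l _ _ (fun x => dX x z0)). intros x. specialize (H1 x z0). unfold R_dist in H1.
    rewrite H0 in H1. rewrite Rmult_1_l in H1. lra.
  - intros e He. exists l. intros phi _ _. rewrite Rminus_diag, Rabs_R0. lra.
Qed.

Lemma delta_in_free (x : X) : in_free dX z0 (delta x).
Proof.
  replace (delta x) with (@mol X ((1, x) :: nil)) by
    (apply functional_extensionality; intros phi; unfold mol, delta; simpl; ring).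
  apply mol_in_free.
Qed.

Lemma in_free_lincomb (a b : R) (mu nu : functional X) :
  in_free dX z0 mu -> in_free dX z0 nu -> in_free dX z0 (lincomb a mu b nu).
Proof.
  intros [[Lm [Cm Bm]] Am] [[Ln [Cn Bn]] An].
  pose proof (Rabs_pos a). pose proof (Rabs_pos b).
  assert (Hcomb : forall u v c1 c2, Rabs u <= c1 -> Rabs v <= c2 ->
            Rabs (a * u + b * v) <= Rabs a * c1 + Rabs b * c2).
  { intros u v c1 c2 H1 H2. eapply Rle_trans; [apply Rabs_triang|]. rewrite !Rabs_mult.
    apply Rplus_le_compat; apply Rmult_le_compat_l; auto. }
  split; [split|].
  - intros a' b' phi psi Hp Hq. unfold lincomb. rewrite Lm, Ln by auto. ring.
  - exists (Rabs a * Cm + Rabs b * Cn). intros phi Hp H1. apply Hcomb; auto.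
  - intros e He.
    set (e' := e / (Rabs a + Rabs b + 1)).
    assert (He' : e' > 0) by (apply Rdiv_lt_0_compat; lra).
    destruct (Am e' He') as [l1 H1]. destruct (An e' He') as [l2 H2].
    exists (map (fun p => (a * fst p, snd p)) l1 ++ map (fun p => (b * fst p, snd p)) l2).
    intros phi Hp Hq. rewrite mol_app, !mol_scale. unfold lincomb.
    replace (a * mu phi + b * nu phi - (a * mol l1 phi + b * mol l2 phi))
      with (a * (mu phi - mol l1 phi) + b * (nu phi - mol l2 phi)) by ring.
    eapply Rle_trans; [apply Hcomb; [apply H1 | apply H2]; auto|].
    assert ((Rabs a + Rabs b + 1) * e' = e) by (unfold e'; field; lra).
    assert (0 <= e') by lra. nra.
Qed.

Lemma in_free_sub (mu nu : functional X) :
  in_free dX z0 mu -> in_free dX z0 nu -> in_free dX z0 (fun phi => mu phi - nu phi).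
Proof.
  intros. replace (fun phi => mu phi - nu phi) with (lincomb 1 mu (-1) nu).
  - apply in_free_lincomb; auto.
  - apply functional_extensionality; intros; unfold lincomb; ring.
Qed.

(* Two bounded linear functionals on F(X) that agree on all Dirac masses agree on F(X):
   they agree on molecules by linearity, hence everywhere by density. *)
Lemma free_dual_ext (A B : functional X -> R) :
  free_dual_elem dX z0 A -> free_dual_elem dX z0 B ->
  (forall x, A (delta x) = B (delta x)) ->
  forall mu, in_free dX z0 mu -> A mu = B mu.
Proof.
  intros [Alin [CA Abd]] [Blin [CB Bbd]] Hdelta.
  assert (Hmol : forall l, A (mol l) = B (mol l)).
  { induction l as [|p l IH].
    - rewrite mol_nil, Alin, Blin, Hdelta by apply delta_in_free. ring.
    - rewrite mol_cons, Alin, Blin, Hdelta, IH by (apply delta_in_free || apply mol_in_free).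
      reflexivity. }
  intros mu Hmu. apply Rminus_diag_uniq, (Rabs_le_eps_zero _ (CA + CB)).
  intros e He. destruct (proj2 Hmu e He) as [l Hl].
  set (nu := lincomb 1 mu (-1) (mol l)).
  assert (Hnu : in_free dX z0 nu) by (apply in_free_lincomb; auto; apply mol_in_free).
  assert (Hnorm : dnorm_le dX z0 nu e).
  { intros phi Hp H1. unfold nu, lincomb.
    replace (1 * mu phi + -1 * mol l phi) with (mu phi - mol l phi) by ring. auto. }
  assert (E : A mu - B mu = A nu - B nu).
  { unfold nu. rewrite Alin, Blin, Hmol by (auto; apply mol_in_free). ring. }
  rewrite E. unfold Rminus. eapply Rle_trans; [apply Rabs_triang|]. rewrite Rabs_Ropp.
  pose proof (Abd _ _ Hnu Hnorm). pose proof (Bbd _ _ Hnu Hnorm). lra.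
Qed.

End FreeSpace.

Lemma lipschitz_comp {X Y : Type} (dX : X -> X -> R) (dY : Y -> Y -> R)
  (phi : Y -> R) (h : X -> Y) (L Lh : R) :
  lipschitz_with dY R_dist L phi -> lipschitz_with dX dY Lh h -> 0 <= L ->
  lipschitz_with dX R_dist (L * Lh) (fun x => phi (h x)).
Proof.
  intros Hphi Hh HL x y. eapply Rle_trans; [apply Hphi|]. rewrite Rmult_assoc.
  apply Rmult_le_compat_l; auto.
Qed.

Section Linearization.
Variables (M N : Type) (d : M -> M -> R) (rho : N -> N -> R) (x0 : M) (y0 : N).
Hypotheses (hM : is_metric d) (hN : is_metric rho).
Variables (f : M -> N) (T : functional M -> functional N).
Hypotheses (hf : lip0map d x0 rho y0 f) (hT : is_linearization d x0 rho y0 f T).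

Lemma comp_lip0 (phi : N -> R) : lip0 rho y0 phi -> lip0 d x0 (fun x => phi (f x)).
Proof.
  intros [[L HL] H0]. destruct hf as [[Lf Hf] Hf0]. split.
  - exists ((Rabs L + 1) * (Rabs Lf + 1)). apply (lipschitz_comp d rho).
    + apply (lipschitz_enlarge _ _ hN), HL.
    + apply (lipschitz_enlarge _ _ hM), Hf.
    + pose proof (Rabs_pos L); lra.
  - simpl. rewrite Hf0. exact H0.
Qed.

Lemma comp_pairing_bound (nu : functional M) (c : R) (phi : N -> R) (L : R) :
  in_free d x0 nu -> dnorm_le d x0 nu c -> lip0 rho y0 phi -> lipschitz_with rho R_dist 1 phi ->
  lipschitz_with d rho L f -> L > 0 -> Rabs (nu (fun x => phi (f x))) <= c * L.
Proof.
  intros Hnu Hc Hphi Hphi1 HL HL0.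
  replace (c * L) with (c * (1 * L)) by ring.
  apply (dual_bound M d x0); [apply Hnu | exact Hc | apply comp_lip0, Hphi | | lra].
  apply (lipschitz_comp d rho); auto; lra.
Qed.

(* The basic identity [<\hat f mu, phi> = <mu, phi o f>]: both sides are bounded linear
   functionals of [mu] agreeing on Dirac masses. *)
Lemma linearization_formula (mu : functional M) (phi : N -> R) :
  in_free d x0 mu -> lip0 rho y0 phi -> T mu phi = mu (fun x => phi (f x)).
Proof.
  intros Hmu Hphi. destruct hT as [Tin [Tlin [[C TC] Tdel]]].
  apply (free_dual_ext M d x0 (fun nu => T nu phi) (fun nu => nu (fun x => phi (f x))));
    auto; [| apply eval_free_dual, comp_lip0; auto].
  split; [intros; apply Tlin; auto|].
  destruct (proj1 Hphi) as [L HL]. apply (lipschitz_enlarge _ _ hN) in HL.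
  exists (C * (Rabs L + 1)). intros nu c Hnu Hc.
  replace (C * (Rabs L + 1) * c) with (C * c * (Rabs L + 1)) by ring.
  apply (dual_bound N rho y0); auto; [apply Tin; auto | pose proof (Rabs_pos L); lra].
Qed.

End Linearization.

Definition slope {M N : Type} (d : M -> M -> R) (rho : N -> N -> R) (h : M -> N) (a b : M) : R :=
  rho (h a) (h b) / d a b.

Section Steep.
Variables (M N : Type) (d : M -> M -> R) (rho : N -> N -> R).
Hypotheses (hM : is_metric d) (hN : is_metric rho).

Lemma not_lipschitz_steep (h : M -> N) (t : R) : ~ lipschitz_with d rho t h ->
  exists a b, d a b > 0 /\ t < slope d rho h a b.
Proof.
  intros Hh. apply not_all_ex_not in Hh as [a Ha]. apply not_all_ex_not in Ha as [b Hab].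
  apply Rnot_le_lt in Hab.
  assert (Hd : d a b > 0).
  { destruct (Rle_lt_or_eq_dec _ _ (dist_nonneg M d hM a b)) as [|E]; [lra|].
    symmetry in E. apply (dist_eq M d hM) in E. subst b.
    rewrite (dist_refl N rho hN), (dist_refl M d hM) in Hab. lra. }
  exists a, b. split; auto. unfold slope. apply Rlt_div_r; auto.
Qed.

Lemma near_optimal_slope (h : M -> N) (Lh t : R) : lipschitz_with d rho Lh h -> 0 <= t ->
  (exists a b, d a b > 0 /\ t < slope d rho h a b) ->
  exists a b, d a b > 0 /\ t <= slope d rho h a b /\ lipschitz_with d rho (2 * slope d rho h a b) h.
Proof.
  intros Hh Ht [x [y [Hxy Hslope]]].
  set (E := fun r => exists a b, d a b > 0 /\ r = slope d rho h a b).
  assert (Hb : bound E).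
  { exists Lh. intros r [a [b [Hab ->]]]. apply Rle_div_l; auto. }
  destruct (completeness E Hb (ex_intro _ _ (ex_intro _ x (ex_intro _ y (conj Hxy eq_refl)))))
    as [m [Hm_ub Hm_least]].
  assert (Hm : slope d rho h x y <= m) by (apply Hm_ub; exists x, y; auto).
  set (t' := Rmax (m / 2) t).
  assert (Ht' : t' < m) by (apply Rmax_lub_lt; lra).
  destruct (classic (exists r, E r /\ r > t')) as [[r [[a [b [Hab ->]]] Hr]] | Hno].
  - exists a, b. assert (m / 2 <= t') by apply Rmax_l. assert (t <= t') by apply Rmax_r.
    split; [auto | split; [lra|]].
    intros u v. destruct (Rle_lt_or_eq_dec _ _ (dist_nonneg M d hM u v)) as [Huv | Huv].
    + assert (Hs : slope d rho h u v <= m) by (apply Hm_ub; exists u, v; auto).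
      apply Rle_div_l in Hs; auto.
      assert (m * d u v <= 2 * slope d rho h a b * d u v) by (apply Rmult_le_compat_r; lra).
      lra.
    + rewrite <- Huv. symmetry in Huv. apply (dist_eq M d hM) in Huv. subst v.
      rewrite (dist_refl N rho hN). lra.
  - exfalso. assert (Hub : is_upper_bound E t').
    { intros r Er. apply Rnot_lt_le. intro. apply Hno. exists r. auto. }
    specialize (Hm_least t' Hub). lra.
Qed.

End Steep.

Section GlidingHump.
Variables (M N : Type) (d : M -> M -> R) (rho : N -> N -> R) (x0 : M) (y0 : N).
Hypotheses (hM : is_metric d) (hN : is_metric rho).
Variable (f : nat -> M -> N).
Hypothesis hf : forall n, lip0map d x0 rho y0 (f n).
Hypothesis hbounded : forall mu phi, in_free d x0 mu -> lip0 rho y0 phi ->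
  exists B, forall n, Rabs (mu (fun x => phi (f n x))) <= B.

(* The orbits [(f_n x)_n] are bounded (take [mu = delta x] and [phi = rho(., y0)]). *)
Lemma orbit_bounded (x : M) : exists B, forall n, rho (f n x) y0 <= B.
Proof.
  destruct (hbounded (delta x) _ (delta_in_free M d x0 x) (proj1 (dist_fun_lip0 N rho y0 hN y0)))
    as [B HB].
  exists B. intros n. specialize (HB n). unfold delta in HB.
  rewrite (dist_refl N rho hN), Rminus_0_r in HB. pose proof (Rle_abs (rho (f n x) y0)). lra.
Qed.

(* A spike is an index [n], a pair [a <> b] and a sign [s]: it contributes the normalized
   molecule [(delta a - delta b) / d(a,b)] to the bad [mu] and the tent function
   [rho(., f_n b) - rho(y0, f_n b)], multiplied by [s], to the bad [phi]. *)
Record spike : Type := mkSpike { sp_n : nat; sp_a : M; sp_b : M; sp_sign : R }.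

Definition diffq (s : spike) (chi : M -> R) : R :=
  (chi (sp_a s) - chi (sp_b s)) / d (sp_a s) (sp_b s).

Definition tent (s : spike) (z : N) : R :=
  rho z (f (sp_n s) (sp_b s)) - rho y0 (f (sp_n s) (sp_b s)).

Definition test_part (h : nat -> spike) (m : nat) (z : N) : R :=
  fsum m (fun l => weight l * (sp_sign (h l) * tent (h l) z)).

Definition pairing_part (h : nat -> spike) (m n : nat) : R :=
  fsum m (fun j => weight j * diffq (h j) (fun x => test_part h m (f n x))).

Definition extend (h : nat -> spike) (k : nat) (s : spike) : nat -> spike :=
  fun j => if Nat.eqb j k then s else h j.

Lemma extend_before (h : nat -> spike) (k : nat) (s : spike) (j : nat) :
  (j < k)%nat -> extend h k s j = h j.
Proof. intros Hj. unfold extend. destruct (Nat.eqb_spec j k); [lia | reflexivity]. Qed.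

Lemma extend_at (h : nat -> spike) (k : nat) (s : spike) : extend h k s k = s.
Proof. unfold extend. rewrite Nat.eqb_refl. reflexivity. Qed.

Lemma extend_self (h : nat -> spike) (k : nat) : extend h k (h k) = h.
Proof.
  apply functional_extensionality. intros j. unfold extend.
  destruct (Nat.eqb_spec j k); [subst |]; reflexivity.
Qed.

Lemma diffq_lin (s : spike) (u v : M -> R) (c : R) :
  diffq s (fun x => u x + c * v x) = diffq s u + c * diffq s v.
Proof. unfold diffq, Rdiv. ring. Qed.

Lemma diffq_lipschitz (s : spike) (chi : M -> R) (L : R) : d (sp_a s) (sp_b s) > 0 ->
  lipschitz_with d R_dist L chi -> Rabs (diffq s chi) <= L.
Proof.
  intros Hd H. unfold diffq. rewrite Rabs_div_pos by auto. apply Rle_div_l; auto. apply H.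
Qed.

Lemma tent_lip (s : spike) (z z' : N) : Rabs (tent s z - tent s z') <= rho z z'.
Proof.
  pose proof (proj2 (dist_fun_lip0 N rho y0 hN (f (sp_n s) (sp_b s))) z z') as H.
  unfold R_dist in H. rewrite Rmult_1_l in H. exact H.
Qed.

Lemma tent_y0 (s : spike) : tent s y0 = 0.
Proof. unfold tent. ring. Qed.

Lemma diffq_tent_self (s : spike) :
  diffq s (fun x => tent s (f (sp_n s) x)) = slope d rho (f (sp_n s)) (sp_a s) (sp_b s).
Proof. unfold diffq, tent, slope. rewrite (dist_refl N rho hN). unfold Rdiv. ring. Qed.

Lemma diffq_orbit_bounded (s : spike) : exists B, forall n psi,
  lipschitz_with rho R_dist 1 psi -> psi y0 = 0 -> Rabs (diffq s (fun x => psi (f n x))) <= B.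
Proof.
  destruct (orbit_bounded (sp_a s)) as [Ba HBa]. destruct (orbit_bounded (sp_b s)) as [Bb HBb].
  exists ((Ba + Bb) * Rabs (/ d (sp_a s) (sp_b s))). intros n psi Hpsi H0.
  unfold diffq, Rdiv. rewrite Rabs_mult. apply Rmult_le_compat_r; [apply Rabs_pos|].
  assert (Hval : forall z, Rabs (psi z) <= rho z y0).
  { intros z. specialize (Hpsi z y0). unfold R_dist in Hpsi. rewrite H0, Rminus_0_r in Hpsi. lra. }
  unfold Rminus. eapply Rle_trans; [apply Rabs_triang|]. rewrite Rabs_Ropp.
  pose proof (Hval (f n (sp_a s))). pose proof (Hval (f n (sp_b s))).
  pose proof (HBa n). pose proof (HBb n). lra.
Qed.

Lemma earlier_spikes_bounded (h : nat -> spike) (k : nat) : exists G, forall n psi,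
  lipschitz_with rho R_dist 1 psi -> psi y0 = 0 ->
  Rabs (fsum k (fun j => weight j * diffq (h j) (fun x => psi (f n x)))) <= G.
Proof.
  induction k as [|k [G HG]].
  - exists 0. intros. simpl. rewrite Rabs_R0. lra.
  - destruct (diffq_orbit_bounded (h k)) as [B HB].
    exists (G + weight k * B). intros n psi Hpsi H0. rewrite fsum_S.
    eapply Rle_trans; [apply Rabs_triang|]. destruct (weight_bounds k).
    rewrite Rabs_mult, (Rabs_right (weight k)) by lra.
    pose proof (HG n psi Hpsi H0).
    pose proof (Rmult_le_compat_l _ _ _ (Rlt_le _ _ H) (HB n psi Hpsi H0)). lra.
Qed.

Lemma test_part_extend (h : nat -> spike) (k : nat) (s : spike) (z : N) :
  test_part (extend h k s) (S k) z = test_part h k z + sp_sign s * weight k * tent s z.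
Proof.
  unfold test_part. rewrite fsum_S, extend_at.
  rewrite (fsum_ext k _ (fun l => weight l * (sp_sign (h l) * tent (h l) z))); [ring|].
  intros j Hj. rewrite extend_before by exact Hj. reflexivity.
Qed.

Lemma diffq_extend_sign (h : nat -> spike) (k n : nat) (a b : M) (sg : R) (j : nat) :
  diffq (extend h k (mkSpike n a b sg) j) = diffq (extend h k (mkSpike n a b 1) j).
Proof. unfold extend. destruct (Nat.eqb j k); reflexivity. Qed.

Lemma pairing_part_extend (h : nat -> spike) (k n : nat) (a b : M) (sg : R) :
  let s1 := extend h k (mkSpike n a b 1) in
  pairing_part (extend h k (mkSpike n a b sg)) (S k) n =
  fsum (S k) (fun j => weight j * diffq (s1 j) (fun x => test_part h k (f n x))) +
  sg * weight k * fsum (S k) (fun j => weight j * diffq (s1 j) (fun x => tent (mkSpike n a b 1) (f n x))).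
Proof.
  intros s1. unfold s1, pairing_part. rewrite <- fsum_scal, <- fsum_plus. apply fsum_ext. intros j _.
  rewrite (functional_extensionality _ _
             (fun x => test_part_extend h k (mkSpike n a b sg) (f n x))).
  rewrite diffq_extend_sign, diffq_lin. unfold tent. simpl. ring.
Qed.

Lemma tent_pairing_diagonal (h : nat -> spike) (k n : nat) (a b : M) :
  let s1 := mkSpike n a b 1 in
  fsum (S k) (fun j => weight j * diffq (extend h k s1 j) (fun x => tent s1 (f n x))) =
  fsum k (fun j => weight j * diffq (h j) (fun x => tent s1 (f n x))) +
  weight k * slope d rho (f n) a b.
Proof.
  intros s1. pose proof (diffq_tent_self s1) as E. cbn [sp_n sp_a sp_b s1] in E.
  rewrite fsum_S, extend_at, E. f_equal. apply fsum_ext.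
  intros j Hj. rewrite extend_before by exact Hj. reflexivity.
Qed.

Lemma pairing_part_prefix (h h' : nat -> spike) (m n : nat) :
  (forall j, (j < m)%nat -> h j = h' j) -> pairing_part h m n = pairing_part h' m n.
Proof.
  intros H. unfold pairing_part. apply fsum_ext. intros j Hj. rewrite H by auto.
  assert (E : forall z, test_part h m z = test_part h' m z).
  { intros z. unfold test_part. apply fsum_ext. intros l Hl. rewrite H by auto. reflexivity. }
  unfold diffq. rewrite !E. reflexivity.
Qed.

Definition good (h : nat -> spike) (k : nat) (s : spike) : Prop :=
  let r := slope d rho (f (sp_n s)) (sp_a s) (sp_b s) in
  d (sp_a s) (sp_b s) > 0 /\ (sp_sign s = 1 \/ sp_sign s = -1) /\
  lipschitz_with d rho (2 * r) (f (sp_n s)) /\ 0 < r /\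
  weight k * weight k * r / 2 + INR k <= Rabs (pairing_part (extend h k s) (S k) (sp_n s)).

Section Unbounded.
Hypothesis unbounded : forall L, exists n, ~ lipschitz_with d rho L (f n).

Lemma steep_spike (Lam : R) : 0 <= Lam -> exists n a b,
  d a b > 0 /\ Lam <= slope d rho (f n) a b /\ lipschitz_with d rho (2 * slope d rho (f n) a b) (f n).
Proof.
  intros HLam. destruct (unbounded Lam) as [n Hn]. destruct (proj1 (hf n)) as [Ln HLn].
  destruct (near_optimal_slope M N d rho hM hN (f n) Ln Lam HLn HLam
              (not_lipschitz_steep M N d rho hM hN (f n) Lam Hn)) as [a [b H]].
  exists n, a, b. exact H.
Qed.

(* Choose a
   very steep pair (slope [r]); the earlier spikes contribute at most [G] against the new
   tent, so the new part has modulus [>= c_k r - G], and a suitable sign prevents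
   cancellation with the part independent of the sign. *)
Lemma good_spike_exists (h : nat -> spike) (k : nat) : exists s, good h k s.
Proof.
  destruct (earlier_spikes_bounded h k) as [G HG].
  destruct (weight_bounds k) as [Hc _].
  set (Lam := Rmax 1 ((INR k + weight k * G) * 2 / (weight k * weight k))).
  destruct (steep_spike Lam) as [n [a [b [Hd [Hr Hlip]]]]];
    [eapply Rle_trans; [|apply Rmax_l]; lra|].
  set (r := slope d rho (f n) a b) in *.
  assert (Hr1 : 1 <= r) by (eapply Rle_trans; [apply Rmax_l | exact Hr]).
  assert (Hr2 : (INR k + weight k * G) * 2 <= r * (weight k * weight k)).
  { apply Rle_div_l; [apply Rmult_lt_0_compat; lra|]. eapply Rle_trans; [apply Rmax_r | exact Hr]. }
  set (s1 := extend h k (mkSpike n a b 1)).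
  set (A := fsum (S k) (fun j => weight j * diffq (s1 j) (fun x => test_part h k (f n x)))).
  set (Q := fsum (S k) (fun j => weight j * diffq (s1 j) (fun x => tent (mkSpike n a b 1) (f n x)))).
  assert (HQ : weight k * r - G <= Rabs Q).
  { unfold Q, s1. rewrite tent_pairing_diagonal. fold r.
    pose proof (HG n _ (proj2 (dist_fun_lip0 N rho y0 hN (f n b))) (tent_y0 (mkSpike n a b 1))) as HF.
    set (F := fsum k _) in *. pose proof (Rabs_triang (F + weight k * r) (- F)).
    rewrite Rabs_Ropp in H. replace (F + weight k * r + - F) with (weight k * r) in H by ring.
    pose proof (Rle_abs (weight k * r)). lra. }
  destruct (choose_sign A Q (weight k) ltac:(lra)) as [sg [Hsg Hbig]].
  exists (mkSpike n a b sg). unfold good; simpl. fold r.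
  repeat split; auto; [lra|].
  rewrite pairing_part_extend. fold s1 A Q.
  assert (weight k * (weight k * r - G) <= weight k * Rabs Q) by (apply Rmult_le_compat_l; lra).
  lra.
Qed.

Definition next_spike (h : nat -> spike) (k : nat) : spike :=
  proj1_sig (constructive_indefinite_description _ (good_spike_exists h k)).

Fixpoint history (k : nat) : nat -> spike :=
  match k with
  | O => fun _ => mkSpike O x0 x0 1
  | S k => extend (history k) k (next_spike (history k) k)
  end.

Definition spike_seq (k : nat) : spike := next_spike (history k) k.

Lemma history_spec (k j : nat) : (j < k)%nat -> history k j = spike_seq j.
Proof.
  induction k as [|k IH]; intros Hj; [lia|]. simpl. unfold extend.
  destruct (Nat.eqb_spec j k); [subst; reflexivity | apply IH; lia].
Qed.

Lemma spike_seq_good (k : nat) : good spike_seq k (spike_seq k).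
Proof.
  pose proof (proj2_sig (constructive_indefinite_description _ (good_spike_exists (history k) k))) as H.
  fold (next_spike (history k) k) (spike_seq k) in H.
  destruct H as [H1 [H2 [H3 [H4 H5]]]]. repeat split; auto.
  rewrite (pairing_part_prefix _ (extend (history k) k (spike_seq k))); auto.
  intros j Hj. unfold extend. destruct (Nat.eqb_spec j k); [subst; reflexivity | symmetry; apply history_spec; lia].
Qed.

Lemma spike_seq_dist (j : nat) : d (sp_a (spike_seq j)) (sp_b (spike_seq j)) > 0.
Proof. apply spike_seq_good. Qed.

Lemma spike_seq_sign (l : nat) (z z' : N) :
  Rabs (sp_sign (spike_seq l) * (tent (spike_seq l) z - tent (spike_seq l) z')) <= rho z z'.
Proof.
  destruct (spike_seq_good l) as [_ [Hs _]].
  assert (Habs : Rabs (sp_sign (spike_seq l)) = 1)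
    by (destruct Hs as [-> | ->]; unfold Rabs; destruct (Rcase_abs _); lra).
  rewrite Rabs_mult, Habs, Rmult_1_l. apply tent_lip.
Qed.

Definition phi_bad (z : N) : R := Series (fun l => weight l * (sp_sign (spike_seq l) * tent (spike_seq l) z)).

Definition mu_bad (chi : M -> R) : R := Series (fun j => weight j * diffq (spike_seq j) chi).

Lemma phi_bad_split (z z' : N) (m : nat) : exists t,
  phi_bad z - phi_bad z' = fsum m (fun l => weight l * (sp_sign (spike_seq l) *
                              (tent (spike_seq l) z - tent (spike_seq l) z'))) + t /\
  Rabs t <= 2 * weight m * rho z z'.
Proof.
  assert (Hterm : forall z l, Rabs (sp_sign (spike_seq l) * tent (spike_seq l) z) <= rho z y0).
  { intros w l. replace (tent (spike_seq l) w) with (tent (spike_seq l) w - tent (spike_seq l) y0)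
      by (rewrite tent_y0; ring). apply spike_seq_sign. }
  destruct (weighted_series_split _ _ m (fun l => spike_seq_sign l z z')) as [t [E B]].
  exists t. split; [|exact B]. rewrite <- E. unfold phi_bad.
  rewrite <- Series_minus by (eapply weighted_series_ex; apply (Hterm _)).
  apply Series_ext. intros; ring.
Qed.

Lemma phi_bad_lip0 : lip0 rho y0 phi_bad /\ lipschitz_with rho R_dist 1 phi_bad.
Proof.
  assert (Hlip : lipschitz_with rho R_dist 1 phi_bad).
  { intros z z'. destruct (phi_bad_split z z' O) as [t [E B]]. unfold R_dist.
    rewrite E. simpl. rewrite Rplus_0_l. simpl in B. lra. }
  split; auto. split; [exists 1; exact Hlip|].
  unfold phi_bad. rewrite (Series_ext _ (fun l => 0 * weight l)).
  - rewrite Series_scal_l. ring.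
  - intros l. rewrite tent_y0. ring.
Qed.

Lemma mu_bad_split (chi : M -> R) (L : R) (m : nat) : lipschitz_with d R_dist L chi -> exists t,
  mu_bad chi = fsum m (fun j => weight j * diffq (spike_seq j) chi) + t /\ Rabs t <= 2 * weight m * L.
Proof.
  intros H. apply weighted_series_split. intros j. apply diffq_lipschitz; auto. apply spike_seq_dist.
Qed.

Fixpoint mu_bad_mol (m : nat) : list (R * M) :=
  match m with
  | O => nil
  | S m => let s := spike_seq m in
           (weight m / d (sp_a s) (sp_b s), sp_a s) ::
           (- (weight m / d (sp_a s) (sp_b s)), sp_b s) :: mu_bad_mol m
  end.

Lemma mu_bad_mol_spec (m : nat) (chi : M -> R) :
  mol (mu_bad_mol m) chi = fsum m (fun j => weight j * diffq (spike_seq j) chi).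
Proof.
  induction m as [|m IH]; [reflexivity|]. rewrite fsum_S, <- IH.
  unfold mol, diffq in *. simpl. unfold Rdiv. ring.
Qed.

Lemma mu_bad_in_free : in_free d x0 mu_bad.
Proof.
  split; [split|].
  - intros a b p q [[Lp Hp] _] [[Lq Hq] _].
    assert (Hser : forall chi L, lipschitz_with d R_dist L chi ->
              ex_series (fun j => weight j * diffq (spike_seq j) chi)).
    { intros chi L H. apply (weighted_series_ex _ L). intros j.
      apply diffq_lipschitz; auto. apply spike_seq_dist. }
    unfold mu_bad. rewrite <- !Series_scal_l, <- Series_plus.
    + apply Series_ext. intros j. rewrite diffq_lin.
      replace (diffq (spike_seq j) (fun x => a * p x)) with (a * diffq (spike_seq j) p)
        by (unfold diffq, Rdiv; ring). ring.
    + apply (ex_series_ext (fun j => scal a (weight j * diffq (spike_seq j) p))); [reflexivity|].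
      apply (@ex_series_scal_l R_AbsRing R_NormedModule), (Hser _ _ Hp).
    + apply (ex_series_ext (fun j => scal b (weight j * diffq (spike_seq j) q))); [reflexivity|].
      apply (@ex_series_scal_l R_AbsRing R_NormedModule), (Hser _ _ Hq).
  - exists 1. intros p _ H1. destruct (mu_bad_split p 1 O H1) as [t [E B]].
    rewrite E. simpl in *. rewrite Rplus_0_l. lra.
  - intros e He. destruct (weight_small e He) as [m Hm]. exists (mu_bad_mol m).
    intros p _ H1. destruct (mu_bad_split p 1 m H1) as [t [E B]].
    rewrite E, mu_bad_mol_spec. replace (_ + t - _) with t by ring. lra.
Qed.

Lemma diffq_test_part_close (n m j : nat) (L : R) : lipschitz_with d rho L (f n) ->
  Rabs (diffq (spike_seq j) (fun x => phi_bad (f n x)) -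
        diffq (spike_seq j) (fun x => test_part spike_seq m (f n x))) <= 2 * weight m * L.
Proof.
  intros HL. set (a := sp_a (spike_seq j)). set (b := sp_b (spike_seq j)).
  destruct (phi_bad_split (f n a) (f n b) m) as [t [E B]].
  assert (Et : (phi_bad (f n a) - phi_bad (f n b)) -
               (test_part spike_seq m (f n a) - test_part spike_seq m (f n b)) = t).
  { unfold test_part. rewrite E, <- fsum_minus.
    rewrite (fsum_ext m
      (fun l => weight l * (sp_sign (spike_seq l) * tent (spike_seq l) (f n a)) -
                weight l * (sp_sign (spike_seq l) * tent (spike_seq l) (f n b)))
      (fun l => weight l * (sp_sign (spike_seq l) *
                (tent (spike_seq l) (f n a) - tent (spike_seq l) (f n b))))) by (intros; ring).
    ring. }
  unfold diffq. fold a b.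
  replace ((phi_bad (f n a) - phi_bad (f n b)) / d a b -
           (test_part spike_seq m (f n a) - test_part spike_seq m (f n b)) / d a b)
    with (t / d a b) by (rewrite <- Et; unfold Rdiv; ring).
  rewrite Rabs_div_pos by apply spike_seq_dist.
  apply Rle_div_l; [apply spike_seq_dist|].
  destruct (weight_bounds m). pose proof (HL a b).
  assert (2 * weight m * rho (f n a) (f n b) <= 2 * weight m * (L * d a b))
    by (apply Rmult_le_compat_l; lra).
  lra.
Qed.

Lemma pairing_part_close (n m : nat) (L : R) : lipschitz_with d rho L (f n) -> 0 <= L ->
  Rabs (mu_bad (fun x => phi_bad (f n x)) - pairing_part spike_seq m n) <= 4 * weight m * L.
Proof.
  intros HL HL0.
  assert (Hchi : lipschitz_with d R_dist (1 * L) (fun x => phi_bad (f n x)))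
    by (apply (lipschitz_comp d rho); auto; [apply phi_bad_lip0 | lra]).
  destruct (mu_bad_split _ _ m Hchi) as [t [E B]].
  pose proof (weighted_fsum_close m _ _ (2 * weight m * L)
               ltac:(destruct (weight_bounds m); nra)
               (fun j _ => diffq_test_part_close n m j L HL)) as Hclose.
  unfold pairing_part. rewrite E.
  match goal with |- Rabs (?S1 + t - ?S2) <= _ =>
    replace (S1 + t - S2) with ((S1 - S2) + t) by ring end.
  eapply Rle_trans; [apply Rabs_triang|]. lra.
Qed.

(* The [k]-th spike forces [|<mu_bad, phi_bad o f_n>| >= k] for its index [n]: the weight
   [c_(k+1) = c_k^2 / 16] makes the error [4 c_(k+1) (2 r)] exactly [c_k^2 r / 2]. *)
Lemma pairing_large (k : nat) :
  INR k <= Rabs (mu_bad (fun x => phi_bad (f (sp_n (spike_seq k)) x))).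
Proof.
  destruct (spike_seq_good k) as [_ [_ [Hlip [Hr Hbig]]]]. rewrite extend_self in Hbig.
  set (r := slope d rho _ _ _) in *.
  pose proof (pairing_part_close _ (S k) (2 * r) Hlip ltac:(lra)) as Hclose.
  assert (Ew : 4 * weight (S k) * (2 * r) = weight k * weight k * r / 2) by (simpl; field).
  rewrite Ew in Hclose.
  set (P := pairing_part _ _ _) in *. set (V := mu_bad _) in *.
  pose proof (Rabs_triang (V - P) P). replace (V - P + P) with V in H by ring.
  rewrite Rabs_minus_sym in Hclose. pose proof (Rabs_triang (P - V) V).
  replace (P - V + V) with P in H0 by ring. lra.
Qed.

Lemma unbounded_absurd : False.
Proof.
  destruct (hbounded mu_bad phi_bad mu_bad_in_free (proj1 phi_bad_lip0)) as [B HB].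
  destruct (INR_archimed 1 B ltac:(lra)) as [k Hk].
  pose proof (pairing_large k). pose proof (HB (sp_n (spike_seq k))). lra.
Qed.

End Unbounded.

Lemma uniformly_lipschitz : exists L, forall n, lipschitz_with d rho L (f n).
Proof.
  apply NNPP. intros H. apply unbounded_absurd. intros L.
  apply not_all_ex_not. intros HL. apply H. exists L. exact HL.
Qed.

End GlidingHump.

Section StrongConvergence.
Variables (M N : Type) (d : M -> M -> R) (rho : N -> N -> R) (x0 : M) (y0 : N).
Hypotheses (hM : is_metric d) (hN : is_metric rho).
Variables (f : nat -> M -> N) (g : M -> N).
Hypotheses (hf : forall n, lip0map d x0 rho y0 (f n)) (hg : lip0map d x0 rho y0 g).
Hypothesis hpointwise : forall x, Un_cv (fun n => rho (f n x) (g x)) 0.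

Lemma molecule_error_cv (l : list (R * M)) :
  Un_cv (fun n => fold_right (fun p acc => Rabs (fst p) * rho (f n (snd p)) (g (snd p)) + acc) 0 l) 0.
Proof.
  induction l as [|p l IH]; simpl.
  - intros e He. exists O. intros. unfold R_dist. rewrite Rminus_0_r, Rabs_R0. lra.
  - assert (Hconst : Un_cv (fun _ => Rabs (fst p)) (Rabs (fst p))).
    { intros e He. exists O. intros. unfold R_dist. rewrite Rminus_diag, Rabs_R0. lra. }
    pose proof (CV_plus _ _ _ _ (CV_mult _ _ _ _ Hconst (hpointwise (snd p))) IH) as H.
    rewrite Rmult_0_r, Rplus_0_r in H. exact H.
Qed.

(* With a common Lipschitz constant, [<mu, phi o f_n>] converges to [<mu, phi o g>]
   uniformly over the unit ball of Lip_0(N): approximate [mu] by a molecule. *)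
Lemma uniform_convergence (L : R) : (forall n, lipschitz_with d rho L (f n)) ->
  forall mu, in_free d x0 mu -> forall e, e > 0 -> exists K, forall n, (n >= K)%nat ->
  forall phi, lip0 rho y0 phi -> lipschitz_with rho R_dist 1 phi ->
  Rabs (mu (fun x => phi (f n x)) - mu (fun x => phi (g x))) <= e.
Proof.
  intros HL mu Hmu e He.
  destruct (proj1 hg) as [Lg HLg].
  apply (lipschitz_enlarge _ _ hM) in HLg.
  assert (HL' : forall n, lipschitz_with d rho (Rabs L + 1) (f n))
    by (intros; apply (lipschitz_enlarge _ _ hM); auto).
  set (L' := Rabs L + 1) in *. set (Lg' := Rabs Lg + 1) in *.
  assert (HP : L' > 0 /\ Lg' > 0) by (unfold L', Lg'; pose proof (Rabs_pos L); pose proof (Rabs_pos Lg); lra).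
  set (eps := e / (2 * (L' + Lg'))).
  assert (Heps : eps * (L' + Lg') = e / 2 /\ eps > 0)
    by (split; [unfold eps; field; lra | apply Rdiv_lt_0_compat; lra]).
  destruct (proj2 Hmu eps (proj2 Heps)) as [l Hl].
  destruct (molecule_error_cv l (e / 2) ltac:(lra)) as [K HK].
  exists K. intros n Hn phi Hphi Hphi1.
  set (nu := fun chi => mu chi - mol l chi) in *.
  assert (Hnu : in_free d x0 nu) by (apply in_free_sub; auto; apply mol_in_free).
  pose proof (comp_pairing_bound M N d rho x0 y0 hM hN (f n) (hf n) nu eps phi L'
                Hnu Hl Hphi Hphi1 (HL' n) ltac:(lra)) as Bf.
  pose proof (comp_pairing_bound M N d rho x0 y0 hM hN g hg nu eps phi Lg'
                Hnu Hl Hphi Hphi1 HLg ltac:(lra)) as Bg.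
  assert (Bmol : Rabs (mol l (fun x => phi (f n x)) - mol l (fun x => phi (g x))) <= e / 2).
  { eapply Rle_trans; [apply (mol_diff M l _ _ (fun x => rho (f n x) (g x)))|].
    - intros x. pose proof (Hphi1 (f n x) (g x)). unfold R_dist in H. lra.
    - specialize (HK n Hn). unfold R_dist in HK. rewrite Rminus_0_r in HK.
      eapply Rle_trans; [apply Rle_abs | lra]. }
  replace (mu (fun x => phi (f n x)) - mu (fun x => phi (g x))) with
    (nu (fun x => phi (f n x)) + - nu (fun x => phi (g x)) +
     (mol l (fun x => phi (f n x)) - mol l (fun x => phi (g x)))) by (unfold nu; ring).
  pose proof (Rabs_triang (nu (fun x => phi (f n x))) (- nu (fun x => phi (g x)))).
  rewrite Rabs_Ropp in H.
  eapply Rle_trans; [apply Rabs_triang|]. lra.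
Qed.

End StrongConvergence.

Section WeakConvergence.
Variables (M N : Type) (d : M -> M -> R) (rho : N -> N -> R) (x0 : M) (y0 : N).
Hypotheses (hM : is_metric d) (hN : is_metric rho).
Variables (f : nat -> M -> N) (g : M -> N).
Hypotheses (hf : forall n, lip0map d x0 rho y0 (f n)) (hg : lip0map d x0 rho y0 g).

(* Weak operator convergence of the linearizations means, via evaluation functionals,
   convergence of [<mu, phi o f_n>] to [<mu, phi o g>] for all [mu] and [phi]. *)
Lemma wot_pairing_cv (Tf : nat -> functional M -> functional N) (Tg : functional M -> functional N) :
  (forall n, is_linearization d x0 rho y0 (f n) (Tf n)) -> is_linearization d x0 rho y0 g Tg ->
  wot_conv d x0 rho y0 Tf Tg ->
  forall mu phi, in_free d x0 mu -> lip0 rho y0 phi ->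
  Un_cv (fun n => mu (fun x => phi (f n x))) (mu (fun x => phi (g x))).
Proof.
  intros hTf hTg hwot mu phi Hmu Hphi.
  pose proof (hwot mu Hmu _ (eval_free_dual N rho y0 hN phi Hphi)) as H. cbv beta in H.
  rewrite (linearization_formula M N d rho x0 y0 hM hN g Tg hg hTg mu phi Hmu Hphi) in H.
  intros e He. destruct (H e He) as [K HK]. exists K. intros n Hn.
  rewrite <- (linearization_formula M N d rho x0 y0 hM hN (f n) (Tf n) (hf n) (hTf n) mu phi Hmu Hphi).
  auto.
Qed.

(* Testing against [delta x] and the distance function to [g x] gives pointwise convergence
   [f_n x -> g x]. *)
Lemma pairing_cv_pointwise :
  (forall mu phi, in_free d x0 mu -> lip0 rho y0 phi ->
     Un_cv (fun n => mu (fun x => phi (f n x))) (mu (fun x => phi (g x)))) ->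
  forall x, Un_cv (fun n => rho (f n x) (g x)) 0.
Proof.
  intros hconv x e He.
  destruct (hconv (delta x) _ (delta_in_free M d x0 x) (proj1 (dist_fun_lip0 N rho y0 hN (g x))) e He)
    as [K HK].
  exists K. intros n Hn. specialize (HK n Hn). unfold R_dist, delta in *.
  rewrite (dist_refl N rho hN) in HK.
  replace (rho (f n x) (g x) - rho y0 (g x) - (0 - rho y0 (g x))) with (rho (f n x) (g x) - 0) in HK
    by ring.
  exact HK.
Qed.

End WeakConvergence.

Theorem proposition6p1 (M N : Type) (d : M -> M -> R) (rho : N -> N -> R) (x0 : M) (y0 : N)
  (hM : is_metric d) (hMc : complete d) (hN : is_metric rho) (hNc : complete rho)
  (f : nat -> M -> N) (g : M -> N)
  (hf : forall n, lip0map d x0 rho y0 (f n)) (hg : lip0map d x0 rho y0 g)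
  (Tf : nat -> functional M -> functional N) (Tg : functional M -> functional N)
  (hTf : forall n, is_linearization d x0 rho y0 (f n) (Tf n))
  (hTg : is_linearization d x0 rho y0 g Tg)
  (hwot : wot_conv d x0 rho y0 Tf Tg) :
  sot_conv d x0 rho y0 Tf Tg.
Proof.
  pose proof (wot_pairing_cv M N d rho x0 y0 hM hN f g hf hg Tf Tg hTf hTg hwot) as hconv.
  destruct (uniformly_lipschitz M N d rho x0 y0 hM hN f hf
              (fun mu phi Hmu Hphi => cv_bounded _ _ (hconv mu phi Hmu Hphi))) as [L HL].
  intros mu Hmu e He.
  destruct (uniform_convergence M N d rho x0 y0 hM hN f g hf hg
              (pairing_cv_pointwise M N d rho x0 y0 hN f g hconv) L HL mu Hmu e He) as [K HK].
  exists K. intros n Hn phi Hphi Hphi1.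
  rewrite (linearization_formula M N d rho x0 y0 hM hN (f n) (Tf n) (hf n) (hTf n) mu phi Hmu Hphi).
  rewrite (linearization_formula M N d rho x0 y0 hM hN g Tg hg hTg mu phi Hmu Hphi).
  apply HK; auto.
Qed.
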